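(* Let $r\ge2$, $\mathcal{X}=\{1,\dots,r\}$, $0<\eta<1$, $0<\epsilon<1$, and put $s=\Big\lfloor \dfrac{\log(1-\epsilon)}{2\log\eta}\Big\rfloor$. Consider the $k$-fold memoryless erasure channel $P_\eta(Y^k|X^k)$. Then: (i) for every $k\ge s$ there is a partition of $\mathcal{X}^k$ into exactly $r^{k-s}$ sets such that any two sequences in the same set differ in at most $s$ coordinates; (ii) consequently, for every $k\ge s$, the number of blocks of an $\epsilon$-reverse compression of $P_\eta(Y^k|X^k)$ satisfies $|\mathcal{P}^{(k)}_\epsilon|\le r^{k-s}$; (iii) the compressibilities $\Gamma^{(k)}_\epsilon$ of $P_\eta(Y^k|X^k)$ satisfy $\liminf_{k\to\infty}\Gamma^{(k)}_\epsilon\ \ge\ 1-r^{-s}$.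
   Context: Erasure channel: $\mathcal{Y}=\{1,\dots,r,\alpha\}$, $P_\eta(y|x)=(1-\eta)\delta_{x,y}+\eta\delta_{\alpha,y}$; its $k$-fold memoryless version is $P_\eta(y^k|x^k)=\prod_{i=1}^kP_\eta(y_i|x_i)$ on input alphabet $\mathcal{X}^k$. Fidelity of distributions: $F[P,Q]=[\sum_x\sqrt{P(x)Q(x)}]^2$. For a channel $P(Y|X)$ with finite input alphabet $\mathcal{X}$ and $\epsilon\in[0,1]$, an $\epsilon$-reverse compression is a partition $\mathcal{P}_\epsilon$ of $\mathcal{X}$ with the minimum possible number of blocks among all partitions such that any two inputs $x,x'$ in the same block satisfy $F[P(Y|x),P(Y|x')]\ge1-\epsilon$. The compressibility is $\Gamma_\epsilon=\frac{|\mathcal{X}|-|\mathcal{P}_\epsilon|}{|\mathcal{X}|-1}$ (for $|\mathcal{X}|\ge2$); $\Gamma^{(k)}_\epsilon$ denotes this quantity for the channel $P_\eta(Y^k|X^k)$ with input alphabet $\mathcal{X}^k$. *)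

From HB Require Import structures.
From mathcomp Require Import all_boot all_order all_algebra.
From mathcomp Require Import all_classical all_reals all_analysis.
Set Implicit Arguments. Unset Strict Implicit. Unset Printing Implicit Defensive.
Import Order.TTheory GRing.Theory Num.Theory.
Local Open Scope ring_scope.

Definition fidelity {R : realType} {Y : finType} (P Q : Y -> R) : R :=
  (\sum_(y : Y) Num.sqrt (P y * Q y)) ^+ 2.

(* A channel is a map W : X -> Y -> R, W x y = P(y|x).
   A partition of X is admissible at level eps if any two inputs in the same
   block have fidelity >= 1 - eps. *)
Definition admissible_partition {R : realType} {X Y : finType}
    (W : X -> Y -> R) (eps : R) (P : {set {set X}}) : bool :=
  finset.partition P [set: X] &&
  [forall B in P, forall x in B, forall x' in B,
     1 - eps <= fidelity (W x) (W x')].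

(* |P_eps| : minimum number of blocks of an admissible partition
   (the singleton partition is always admissible, so #|X| is a valid default). *)
Definition rev_compression_size {R : realType} {X Y : finType}
    (W : X -> Y -> R) (eps : R) : nat :=
  \big[minn/#|X|]_(P : {set {set X}} | admissible_partition W eps P) #|P|.

Definition compressibility {R : realType} {X Y : finType}
    (W : X -> Y -> R) (eps : R) : R :=
  ((#|X|)%:R - (rev_compression_size W eps)%:R) / ((#|X|)%:R - 1).

(* Erasure channel on X = {1..r} (as 'I_r), output alphabet option 'I_r,
   with None playing the role of the erasure symbol alpha. *)
Definition erasure {R : realType} (r : nat) (eta : R) (x : 'I_r)
    (y : option 'I_r) : R :=
  (1 - eta) * (y == Some x)%:R + eta * (y == None)%:R.

Definition erasure_k {R : realType} (r k : nat) (eta : R)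
    (x : {ffun 'I_k -> 'I_r}) (y : {ffun 'I_k -> option 'I_r}) : R :=
  \prod_(i < k) erasure eta (x i) (y i).

Definition hamming {r k : nat} (x y : {ffun 'I_k -> 'I_r}) : nat :=
  #|[set i : 'I_k | x i != y i]|.

From HB Require Import structures.
From mathcomp Require Import all_boot all_order all_algebra.
From mathcomp Require Import all_classical all_reals all_analysis.
From mathcomp Require Import ring lra.
Import Order.TTheory GRing.Theory Num.Theory.
Local Open Scope ring_scope.

(* 1. Fidelity factorises over memoryless channels: the Bhattacharyya overlap
      sum_y sqrt(P y Q y) of two product distributions is the product of the
      per-coordinate overlaps.  For the erasure channel the overlap of the
      rows of inputs a, b is 1 if a = b and eta otherwise, hence
      F[P(.|x), P(.|x')] = eta ^ (2 d(x, x')), with d the Hamming distance.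
   2. Grouping the sequences of X^k by their last k - s coordinates (the
      fibres of the suffix map, which is onto X^(k-s)) gives a partition into
      r^(k-s) blocks of Hamming diameter at most s: this is part (i).
   3. By the choice of s as a floor, eta^(2s) >= 1 - eps, so this partition
      is eps-admissible and bounds the optimal one: this is part (ii).
   4. Since |P_eps^(k)| r^s <= r^k, an elementary inequality gives
      Gamma_eps^(k) >= 1 - r^-s for every k >= max(s,1), whence (iii). *)

Definition overlap {R : realType} {Y : finType} (P Q : Y -> R) : R :=
  \sum_(y : Y) Num.sqrt (P y * Q y).

Lemma fidelityE (R : realType) (Y : finType) (P Q : Y -> R) :
  fidelity P Q = overlap P Q ^+ 2.
Proof. by []. Qed.

Lemma sqrtr_prod (R : realType) (I : finType) (F : I -> R) :
  (forall i, 0 <= F i) -> Num.sqrt (\prod_i F i) = \prod_i Num.sqrt (F i).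
Proof.
move=> F_ge0; pose K (a b : R) := Num.sqrt a = b /\ 0 <= a.
suff [] : K (\prod_i F i) (\prod_i Num.sqrt (F i)) by [].
apply: (big_rec2 K); first by split; rewrite ?sqrtr1.
by move=> i a b _ [<- a_ge0]; split; rewrite ?sqrtrM ?mulr_ge0.
Qed.

Lemma overlap_prod (R : realType) (I Y : finType) (V W : I -> Y -> R) :
  (forall i y, 0 <= V i y) -> (forall i y, 0 <= W i y) ->
  overlap (fun y : {ffun I -> Y} => \prod_i V i (y i))
          (fun y : {ffun I -> Y} => \prod_i W i (y i))
  = \prod_i overlap (V i) (W i).
Proof.
move=> V_ge0 W_ge0; rewrite /overlap bigA_distr_bigA /=.
by apply: eq_bigr => y _; rewrite -big_split sqrtr_prod // => i; rewrite mulr_ge0.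
Qed.

Lemma sum_delta (R : nzRingType) (T : finType) (c : T) :
  \sum_(y : T) (y == c)%:R = 1 :> R.
Proof. by rewrite (bigD1 c) //= eqxx big1 ?addr0 // => y /negbTE ->. Qed.

Lemma erasure_ge0 (R : realType) (r : nat) (eta : R) (a : 'I_r) y :
  0 <= eta <= 1 -> 0 <= erasure eta a y.
Proof.
by case/andP=> eta_ge0 eta_le1; rewrite addr_ge0 ?mulr_ge0 ?subr_ge0.
Qed.

(* The two rows of the erasure channel for inputs a, b overlap only on the
   erasure symbol, unless a = b. *)
Lemma overlap_erasure (R : realType) (r : nat) (eta : R) (a b : 'I_r) :
  0 <= eta <= 1 ->
  overlap (erasure eta a) (erasure eta b) = if a == b then 1 else eta.
Proof.
case/andP=> eta_ge0 eta_le1.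
have termE (y : option 'I_r) : Num.sqrt (erasure eta a y * erasure eta b y)
    = eta * (y == None)%:R + (1 - eta) * (a == b)%:R * (y == Some a)%:R.
  rewrite /erasure; case: y => [c|] /=; last first.
    by rewrite !mulr0 !add0r !mulr1 addr0 -expr2 sqrtr_sqr ger0_norm.
  rewrite !mulr0 !addr0 add0r !(inj_eq Some_inj) (eq_sym c).
  have [<-|ac] := eqVneq a c; last by rewrite !(mulr0, mul0r) sqrtr0.
  case: (a == b); rewrite ?mulr1 ?mulr0 ?sqrtr0 //.
  by rewrite -expr2 sqrtr_sqr ger0_norm ?subr_ge0.
rewrite /overlap; under eq_bigr do rewrite termE.
rewrite big_split /= -!mulr_sumr !sum_delta !mulr1.
by case: (a == b); rewrite ?mulr1 ?mulr0 ?addr0 // addrC subrK.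
Qed.

Lemma fidelity_erasure_k (R : realType) (r k : nat) (eta : R)
    (x x' : {ffun 'I_k -> 'I_r}) :
  0 <= eta <= 1 ->
  fidelity (erasure_k eta x) (erasure_k eta x') = eta ^+ (2 * hamming x x').
Proof.
move=> eta01; rewrite fidelityE /erasure_k.
rewrite (@overlap_prod _ _ _ (fun i => erasure eta (x i)) (fun i => erasure eta (x' i)));
  last 2 first; [by move=> *; apply: erasure_ge0..|].
under eq_bigr do rewrite overlap_erasure //.
rewrite (bigID (fun i => x i == x' i)) /= big1 => [|i /eqP ->]; last by rewrite eqxx.
rewrite mul1r mulnC exprM -prodr_const /hamming; congr (_ ^+ 2).
by apply: eq_big => [i|i /negbTE ->]; rewrite ?inE.
Qed.

Definition fibers {T U : finType} (f : T -> U) : {set {set T}} :=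
  [set [set x | f x == u] | u : U].

Section Fibers.
Context {T U : finType} {f : T -> U} {g : U -> T}.
Hypothesis fK : cancel g f.

Lemma fibers_partition : finset.partition (fibers f) [set: T].
Proof.
apply/and3P; split.
- apply/eqP/setP => x; rewrite inE; apply/bigcupP.
  by exists [set y | f y == f x]; rewrite ?inE //; apply: imset_f.
- apply/finset.trivIsetP => _ _ /imsetP[u _ ->] /imsetP[v _ ->] neq_uv.
  rewrite -setI_eq0; apply/eqP/setP => x; rewrite !inE.
  by apply/andP => -[/eqP fx_u /eqP fx_v]; rewrite -fx_u -fx_v eqxx in neq_uv.
- by apply/imsetP => -[u _ /setP/(_ (g u))]; rewrite !inE fK eqxx.
Qed.

Lemma card_fibers : #|fibers f| = #|U|.
Proof.
rewrite card_imset ?cardsT // => u v /setP/(_ (g u)).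
by rewrite !inE fK eqxx => /esym/eqP.
Qed.

Lemma fibers_const B x y : B \in fibers f -> x \in B -> y \in B -> f x = f y.
Proof. by case/imsetP=> u _ ->; rewrite !inE => /eqP-> /eqP->. Qed.

End Fibers.

Section SuffixPartition.
Context {r k s : nat}.
Hypotheses (r_gt0 : (0 < r)%N) (s_le_k : (s <= k)%N).

(* Coordinate j of a suffix of length k - s is coordinate s + j of X^k. *)
Definition suffix_index (j : 'I_(k - s)) : 'I_k :=
  cast_ord (subnKC s_le_k) (rshift s j).

Definition suffix (x : {ffun 'I_k -> 'I_r}) : {ffun 'I_(k - s) -> 'I_r} :=
  [ffun j => x (suffix_index j)].

(* Extending a suffix by a fixed symbol on the first s coordinates. *)
Definition pad_suffix (z : {ffun 'I_(k - s) -> 'I_r}) : {ffun 'I_k -> 'I_r} :=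
  [ffun i => if fintype.split (cast_ord (esym (subnKC s_le_k)) i) is inr j then z j
             else Ordinal r_gt0].

Lemma pad_suffixK : cancel pad_suffix suffix.
Proof.
move=> z; apply/ffunP => j; rewrite !ffunE /suffix_index cast_ordK.
by rewrite (unsplitK (inr j)).
Qed.

Lemma suffix_indexP {i : 'I_k} : (s <= i)%N -> exists j, i = suffix_index j.
Proof.
move=> s_le_i.
have j_lt : (i - s < k - s)%N by rewrite ltn_sub2r // (leq_ltn_trans s_le_i).
by exists (Ordinal j_lt); apply: val_inj; rewrite /= subnKC.
Qed.

(* Sequences with the same suffix can only differ in the first s coordinates. *)
Lemma hamming_same_suffix (x y : {ffun 'I_k -> 'I_r}) :
  suffix x = suffix y -> (hamming x y <= s)%N.
Proof.
move=> eq_xy; rewrite /hamming.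
have diff_prefix : [set i | x i != y i] \subset [set widen_ord s_le_k j | j : 'I_s].
  apply/fintype.subsetP => i; rewrite inE => neq_i.
  have [i_lt_s|s_le_i] := ltnP i s.
    by apply/imsetP; exists (Ordinal i_lt_s) => //; apply: val_inj.
  have [j def_i] := suffix_indexP s_le_i.
  by move/ffunP/(_ j): eq_xy; rewrite !ffunE -def_i => eq_i; rewrite eq_i eqxx in neq_i.
apply: leq_trans (subset_leq_card diff_prefix) _.
by apply: leq_trans (leq_imset_card _ _) _; rewrite card_ord.
Qed.

End SuffixPartition.

Lemma suffix_partition {r k s : nat} : (0 < r)%N -> (s <= k)%N ->
  exists P : {set {set {ffun 'I_k -> 'I_r}}},
    [/\ finset.partition P [set: {ffun 'I_k -> 'I_r}],
        #|P| = (r ^ (k - s))%N &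
        forall B, B \in P -> forall x y, x \in B -> y \in B -> (hamming x y <= s)%N].
Proof.
move=> r_gt0 s_le_k; have padK := pad_suffixK r_gt0 s_le_k.
exists (fibers (suffix s_le_k)); split.
- exact: fibers_partition padK.
- by rewrite (card_fibers padK) card_ffun !card_ord.
- move=> B BP x y xB yB; apply: hamming_same_suffix.
  exact: fibers_const BP xB yB.
Qed.

Lemma bigminn_le (I : finType) (P : pred I) (F : I -> nat) (x0 : nat) (i : I) :
  P i -> (\big[minn/x0]_(j | P j) F j <= F i)%N.
Proof.
move=> Pi; rewrite -big_filter.
have : i \in [seq j <- index_enum I | P j] by rewrite mem_filter Pi mem_index_enum.
elim: [seq j <- _ | _] => [//|j js IHjs]; rewrite in_cons big_cons.
case/orP=> [/eqP <-|/IHjs]; first exact: geq_minl.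
exact: leq_trans (geq_minr _ _).
Qed.

Lemma rev_compression_size_le (R : realType) (X Y : finType) (W : X -> Y -> R)
    (eps : R) (P : {set {set X}}) :
  admissible_partition W eps P -> (rev_compression_size W eps <= #|P|)%N.
Proof. exact: bigminn_le. Qed.

Lemma erasure_threshold {R : realType} {eta eps : R} {s : nat} :
  0 < eta < 1 -> 0 < eps < 1 ->
  s%:Z = Num.floor (ln (1 - eps) / (2 * ln eta)) -> 1 - eps <= eta ^+ (2 * s).
Proof.
move=> /andP[eta_gt0 eta_lt1] /andP[eps_gt0 eps_lt1] def_s.
have ln_eta_lt0 : ln eta < 0 by apply: ln_lt0; rewrite eta_gt0 eta_lt1.
rewrite -ler_ln ?posrE ?exprn_gt0 ?subr_gt0 // lnXn //.
set q := ln (1 - eps) / (2 * ln eta).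
have s_le_q : s%:R <= q by have := floor_le q; rewrite -def_s.
have ln_q : ln (1 - eps) = q * (2 * ln eta) by rewrite divfK // mulf_neq0 // lt_eqF.
rewrite -mulr_natl natrM ln_q; nra.
Qed.

Lemma erasure_rev_compression_le {R : realType} {r k : nat} {eta eps : R} {s : nat} :
  (0 < r)%N -> 0 < eta < 1 -> 0 < eps < 1 ->
  s%:Z = Num.floor (ln (1 - eps) / (2 * ln eta)) -> (s <= k)%N ->
  (rev_compression_size (@erasure_k R r k eta) eps <= r ^ (k - s))%N.
Proof.
move=> r_gt0 eta01 eps01 def_s s_le_k.
have [P [partP <- diamP]] := suffix_partition r_gt0 s_le_k.
apply: rev_compression_size_le; rewrite /admissible_partition partP /=.
apply/forall_inP => B BP; apply/forall_inP => x xB; apply/forall_inP => y yB.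
have /andP[eta_gt0 eta_lt1] := eta01.
rewrite fidelity_erasure_k ?(ltW eta_gt0) ?(ltW eta_lt1) //.
apply: le_trans (erasure_threshold eta01 eps01 def_s) _.
by apply: ler_wiXn2l; rewrite ?ltW // leq_mul2l (diamP B BP x y xB yB) orbT.
Qed.

Lemma saving_ratio_ge (R : realFieldType) (n N a : R) :
  1 <= a -> 1 < n -> N * a <= n -> 1 - a^-1 <= (n - N) / (n - 1).
Proof.
move=> a_ge1 n_gt1 Na_le_n.
have a_gt0 : 0 < a by lra.
have N_le : N <= n / a by rewrite ler_pdivlMr.
have inva_le1 : a^-1 <= 1 by rewrite invf_le1.
rewrite ler_pdivlMr ?subr_gt0 //.
have -> : (1 - a^-1) * (n - 1) = n - n / a - 1 + a^-1 by ring.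
lra.
Qed.

Lemma erasure_compressibility_ge (R : realType) (r k : nat) (eta eps : R) (s : nat) :
  (2 <= r)%N -> 0 < eta < 1 -> 0 < eps < 1 ->
  s%:Z = Num.floor (ln (1 - eps) / (2 * ln eta)) -> (s <= k)%N -> (0 < k)%N ->
  1 - r%:R ^- s <= compressibility (@erasure_k R r k eta) eps.
Proof.
move=> r_ge2 eta01 eps01 def_s s_le_k k_gt0.
have r_gt0 : (0 < r)%N by apply: leq_trans r_ge2.
have N_le := erasure_rev_compression_le r_gt0 eta01 eps01 def_s s_le_k.
rewrite /compressibility card_ffun !card_ord.
apply: saving_ratio_ge.
- by rewrite -natrX ler1n expn_gt0 r_gt0.
- rewrite ltr1n; apply: leq_trans r_ge2 _.
  by have := leq_pexp2l r_gt0 k_gt0; rewrite expn1.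
- rewrite -natrX -natrM ler_nat; apply: leq_trans (leq_mul N_le (leqnn _)) _.
  by rewrite -expnD subnK.
Qed.

Lemma limn_einf_ge (R : realType) (u : nat -> \bar R) (c : \bar R) (N : nat) :
  (forall n, (N <= n)%N -> (c <= u n)%E) -> (c <= limn_einf u)%E.
Proof.
move=> u_ge; rewrite limn_einf_lim; apply: lime_ge; first exact: is_cvg_einfs.
exists N => // m /= N_le_m; apply: le_ereal_inf_tmp => _ [n /= m_le_n <-].
by apply: u_ge; apply: leq_trans m_le_n.
Qed.

Theorem mainTheorem5 (R : realType) (r : nat) (eta eps : R) (s : nat) :
  (2 <= r)%N -> 0 < eta < 1 -> 0 < eps < 1 ->
  s%:Z = Num.floor (ln (1 - eps) / (2 * ln eta)) ->
  (* (i) *)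
  (forall k : nat, (s <= k)%N ->
     exists P : {set {set {ffun 'I_k -> 'I_r}}},
       [/\ finset.partition P [set: {ffun 'I_k -> 'I_r}],
           #|P| = (r ^ (k - s))%N &
           forall B, B \in P -> forall x y, x \in B -> y \in B ->
             (hamming x y <= s)%N]) /\
  (* (ii) *)
  (forall k : nat, (s <= k)%N ->
     (rev_compression_size (@erasure_k R r k eta) eps <= r ^ (k - s))%N) /\
  (* (iii) *)
  ((1 - (r%:R ^- s) : R)%:E <=
     limn_einf (fun k : nat => (compressibility (@erasure_k R r k eta) eps)%:E))%E.
Proof.
move=> r_ge2 eta01 eps01 def_s.
have r_gt0 : (0 < r)%N by apply: leq_trans r_ge2.
split; [|split].
- by move=> k; apply: suffix_partition.
- by move=> k; apply: erasure_rev_compression_le.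
- apply: (@limn_einf_ge _ _ _ (maxn s 1)) => k; rewrite geq_max => /andP[s_le_k k_gt0].
  by rewrite lee_fin; apply: erasure_compressibility_ge.
Qed.
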